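(* For all $N\subseteq\mathbf{U}$, $w\in\mathbb{W}(N)$, $j\in N$, and $T\subseteq N\setminus\{j\}$ such that $j$ is a null player in $w$, we have $\mathrm{MPW}_j(w^{r^\star}_{-T})=0$.
   Context: $\mathbf{U}$ is a finite set of players; cardinalities of $N,S,B$ are $n,s,b$. $\Pi(N)$ is the set of partitions of $N$ ($\Pi(\emptyset)=\{\emptyset\}$). $p^\star$ is the Ewens distribution $p^\star_N(\pi)=\frac{\prod_{B\in\pi}(b-1)!}{n!}$. $\pi_{+i\leadsto B}=(\pi\setminus\{B\})\cup\{B\cup\{i\}\}$ for $B\in\pi$, $\pi_{+i\leadsto\emptyset}=\pi\cup\{\{i\}\}$. Embedded coalitions $\mathcal{E}(N)=\{(S,\pi):S\subseteq N,\pi\in\Pi(N\setminus S)\}$; a TUX game on $N$ is $w:\mathcal{E}(N)\to\mathbb{R}$ with $w(\emptyset,\pi)=0$; $\mathbb{W}(N)$ their set. The restriction operator $r^\star$ maps $w\in\mathbb{W}(N)$, $i\in N$ to $w^{r^\star}_{-i}\in\mathbb{W}(N\setminus\{i\})$, $w^{r^\star}_{-i}(S,\pi)=\frac{1}{n-s}w(S,\pi_{+i\leadsto\emptyset})+\sum_{B\in\pi}\frac{b}{n-s}w(S,\pi_{+i\leadsto B})$ for $(S,\pi)\in\mathcal{E}(N\setminus\{i\})$; it is path independent ($(w^{r^\star}_{-i})^{r^\star}_{-k}=(w^{r^\star}_{-k})^{r^\star}_{-i}$), so $w^{r^\star}_{-T}$ (removing the players of $T$ successively, in any order) is well defined, with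 $w^{r^\star}_{-\emptyset}=w$. Player $j$ is a null player in $w$ if $w(S\cup\{j\},\pi)=w(S,\pi_{+j\leadsto B})$ for all $(S,\pi)\in\mathcal{E}(N\setminus\{j\})$, $B\in\pi\cup\{\emptyset\}$. The Shapley value of a TU game $v$ is $\mathrm{Sh}_i(v)=\sum_{S\subseteq N\setminus\{i\}}\frac{s!(n-s-1)!}{n!}(v(S\cup\{i\})-v(S))$; the MPW solution is $\mathrm{MPW}(w)=\mathrm{Sh}(\bar v^\star_w)$ with $\bar v^\star_w(S)=\sum_{\pi\in\Pi(N\setminus S)}p^\star_{N\setminus S}(\pi)w(S,\pi)$. *)

From mathcomp Require Import all_boot all_order all_algebra.
Set Implicit Arguments. Unset Strict Implicit. Unset Printing Implicit Defensive.
Import Order.TTheory GRing.Theory Num.Theory.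
Local Open Scope ring_scope.

Section Defs.
Variables (U : finType) (R : realFieldType).

(* A TUX game is represented as a total function on pairs (S, pi); only its
   values on embedded coalitions (S, pi) with S \subset N and
   partition pi (N :\: S) matter. *)
Definition game := {set U} -> {set {set U}} -> R.

Definition plus (P : {set {set U}}) (i : U) (B : {set U}) : {set {set U}} :=
  if B == set0 then P :|: [set [set i]]
  else (P :\ B) :|: [set B :|: [set i]].

Definition tux (N : {set U}) (w : game) : Prop :=
  forall P : {set {set U}}, partition P N -> w set0 P = 0.

Definition null_player (N : {set U}) (w : game) (j : U) : Prop :=
  forall (S : {set U}) (P : {set {set U}}) (B : {set U}),
    S \subset N :\ j -> partition P ((N :\ j) :\: S) ->
    (B \in P) || (B == set0) ->
    w (j |: S) P = w S (plus P j B).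

Definition restr (N : {set U}) (w : game) (i : U) : game :=
  fun S P =>
    ((#|N| - #|S|)%N%:R)^-1 * w S (plus P i set0)
    + \sum_(B in P) (#|B|%:R / (#|N| - #|S|)%N%:R) * w S (plus P i B).

Fixpoint restr_seq (N : {set U}) (w : game) (s : seq U) : game :=
  match s with
  | [::] => w
  | i :: s' => restr_seq (N :\ i) (restr N w i) s'
  end.

Definition pstar (N : {set U}) (P : {set {set U}}) : R :=
  (\prod_(B in P) (#|B|.-1)`!)%N%:R / (#|N|`!)%:R.

Definition vbar (N : {set U}) (w : game) (S : {set U}) : R :=
  \sum_(P : {set {set U}} | partition P (N :\: S)) pstar (N :\: S) P * w S P.

Definition shapley (N : {set U}) (v : {set U} -> R) (i : U) : R :=
  \sum_(S : {set U} | S \subset N :\ i)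
     ((#|S|`! * (#|N| - #|S| - 1)`!)%N%:R / (#|N|`!)%:R) * (v (i |: S) - v S).

Definition MPW (N : {set U}) (w : game) (i : U) : R := shapley N (vbar N w) i.

End Defs.

From mathcomp Require Import all_boot all_order all_algebra.
From mathcomp Require Import ring.
Import GRing.Theory Num.Theory.
Set Implicit Arguments. Unset Strict Implicit. Unset Printing Implicit Defensive.
Local Open Scope ring_scope.

(* Every partition of [i |: X] arises in exactly one way from a partition [P] of [X],
   by seating [i] alone or in a block [B] of [P] (Chinese restaurant process), and the
   Ewens weights factor accordingly: [pstar (i |: X)] is [pstar X P] times
   [1/(|X|+1)], resp. [|B|/(|X|+1)].  These are precisely the weights of the
   restriction operator, so the Ewens average [vbar] of a restricted game agrees with
   that of the original game on the remaining coalitions.  The same decomposition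
   applied to a null player [j] gives [vbar (j |: S) = vbar S], so [j] is a null
   player of the TU game [vbar], whose Shapley value therefore vanishes. *)

Section AddPlayer.
Variable U : finType.
Implicit Types (X B C : {set U}) (P Q : {set {set U}}) (i : U).

Lemma partition_setD0 P X : partition P X -> P :\ set0 = P.
Proof. by move=> pP; apply/setDidPl; rewrite disjoint_sym disjoints1 (partition0 pP). Qed.

Lemma block0_sub X P B : partition P X -> B \in set0 |: P -> B \subset X.
Proof. by move=> pP /setU1P[-> | /(partitionS pP)//]; apply: sub0set. Qed.

Lemma notin_block0 X P i B : i \notin X -> partition P X -> B \in set0 |: P ->
  i \notin B.
Proof. by move=> iX pP hB; apply: contra iX; apply: (subsetP (block0_sub pP hB)). Qed.

Lemma setU1_notin_partition X P i B : i \notin X -> partition P X -> i |: B \notin P.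
Proof. by move=> iX pP; apply: contra iX => /(partitionS pP) /subsetP; apply; apply: setU11. Qed.

Lemma partitionD1_block0 X P B : partition P X -> B \in set0 |: P ->
  partition (P :\ B) (X :\: B).
Proof.
move=> pP /setU1P[-> | BP]; last exact: partitionD1.
by rewrite setD0 (partition_setD0 pP).
Qed.

Lemma partitionU1_set0 X P B : partition P X -> [disjoint B & X] ->
  partition ((B |: P) :\ set0) (B :|: X).
Proof.
move=> pP dBX; have [-> | B0] := eqVneq B set0.
  by rewrite setU1K ?set0U ?(partition0 pP).
by rewrite (partition_setD0 (partitionU1 pP B0 dBX)); apply: partitionU1.
Qed.

Lemma plusE X P i B : partition P X -> plus P i B = (i |: B) |: (P :\ B).
Proof.
move=> pP; rewrite /plus [_ |: (P :\ B)]setUC [i |: B]setUC.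
by case: eqP => // ->; rewrite set0U (partition_setD0 pP).
Qed.

Lemma partition_plus X P i B : i \notin X -> partition P X -> B \in set0 |: P ->
  partition (plus P i B) (i |: X).
Proof.
move=> iX pP hB; rewrite (plusE i B pP).
have -> : i |: X = (i |: B) :|: (X :\: B).
  by rewrite -setUA -{1}(setID X B) (setIidPr (block0_sub pP hB)).
apply: partitionU1; first exact: partitionD1_block0.
  by apply/set0Pn; exists i; rewrite setU11.
rewrite -setI_eq0; apply/eqP/setP => x; rewrite !inE.
by case: (x =P i) => [->|]; rewrite ?(negbTE iX) ?andbF //; case: (x \in B).
Qed.

Definition unplus i Q : {set {set U}} * {set U} :=
  let A := pblock Q i in (((A :\ i) |: (Q :\ A)) :\ set0, A :\ i).

Lemma plusK X P i B : i \notin X -> partition P X -> B \in set0 |: P ->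
  unplus i (plus P i B) = (P, B).
Proof.
move=> iX pP hB; have pQ := partition_plus iX pP hB; rewrite (plusE i B pP) in pQ *.
have iB := notin_block0 iX pP hB.
have iBP : i |: B \notin P :\ B.
  by rewrite in_setD1 negb_and (setU1_notin_partition B iX pP) orbT.
rewrite /unplus (def_pblock (partition_trivIset pQ) (setU11 _ _) (setU11 i B)).
rewrite !setU1K //; congr pair; case/setU1P: hB => [-> | BP].
  by rewrite !(partition_setD0 pP) setU1K ?(partition0 pP).
by rewrite setD1K // (partition_setD0 pP).
Qed.

Lemma unplusK X Q i P B : i \notin X -> partition Q (i |: X) ->
  unplus i Q = (P, B) -> [/\ partition P X, B \in set0 |: P & plus P i B = Q].
Proof.
move=> iX pQ; rewrite /unplus; set A := pblock Q i; case=> <- <-.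
have tQ := partition_trivIset pQ.
have AQ : A \in Q by apply: pblock_mem; rewrite (cover_partition pQ) setU11.
have iA : i \in A by rewrite mem_pblock (cover_partition pQ) setU11.
have /subsetP AX := partitionS pQ AQ.
have BX : A :\ i \subset X.
  by apply/subsetP => x /setD1P[/negbTE xi /AX]; rewrite !inE xi.
have BQ : A :\ i \notin Q :\ A.
  apply/negP => /setD1P[BA BQ]; case/set0Pn: (partition_neq0 pQ BQ) => x xB.
  have xA : x \in A by case/setD1P: xB.
  by case/eqP: BA; rewrite -(def_pblock tQ BQ xB) (def_pblock tQ AQ xA).
have pQA : partition (Q :\ A) (X :\: (A :\ i)).
  have -> : X :\: (A :\ i) = (i |: X) :\: A.
    by apply/setP => x; rewrite !inE; case: (x =P i) => [->|_] /=; rewrite ?iA ?(negbTE iX).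
  exact: partitionD1.
have pP : partition ((A :\ i |: Q :\ A) :\ set0) X.
  rewrite -(setID X (A :\ i)) (setIidPr BX); apply: partitionU1_set0 => //.
  by rewrite disjoint_sym; case/subsetDP: (subxx (X :\: (A :\ i))).
split=> //; first by rewrite !inE eqxx /= andbT orbN.
rewrite (plusE i _ pP) setD1K //.
have -> : (A :\ i |: Q :\ A) :\ set0 :\ (A :\ i) = Q :\ A.
  apply/setP => C; rewrite !inE; case: (C =P A :\ i) => [->|_] /=.
    by move: BQ; rewrite !inE => /negbTE.
  by case: (C =P set0) => [->|_]; rewrite ?(partition0 pQ) ?andbF.
exact: setD1K.
Qed.

Lemma sum_partition_plus (V : nmodType) X i (F : {set {set U}} -> V) :
  i \notin X ->
  \sum_(P | partition P X) \sum_(B in set0 |: P) F (plus P i B) =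
  \sum_(Q | partition Q (i |: X)) F Q.
Proof.
move=> iX; rewrite pair_big_dep (reindex_onto (fun PB => plus PB.1 i PB.2) (unplus i)).
  apply: eq_bigl => -[P B] /=; apply/andP/andP => [[pP hB] | [pQ /eqP e]].
    by split; [apply: partition_plus | rewrite (plusK iX pP hB)].
  by case: (unplusK iX pQ e) => ->.
by move=> Q pQ; case e: (unplus i Q) => [P B]; case: (unplusK iX pQ e).
Qed.

End AddPlayer.

Section Ewens.
Variables (U : finType) (R : realFieldType).
Implicit Types (X B : {set U}) (P : {set {set U}}) (i : U).

Lemma prod_fact_plus X P i B : i \notin X -> partition P X -> B \in set0 |: P ->
  (\prod_(C in plus P i B) (#|C|.-1)`! = #|B|`! * \prod_(C in P :\ B) (#|C|.-1)`!)%N.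
Proof.
move=> iX pP hB; rewrite (plusE i B pP) big_setU1 /=; last first.
  by rewrite in_setD1 negb_and (setU1_notin_partition B iX pP) orbT.
by rewrite cardsU1 (notin_block0 iX pP hB).
Qed.

Let natS_neq0 n : (1 + n%:R : R) != 0. Proof. by rewrite addrC natr1 pnatr_eq0. Qed.
Let fact_neq0 n : (n`!%:R : R) != 0. Proof. by rewrite pnatr_eq0 -lt0n fact_gt0. Qed.

Lemma pstar_plus_set0 X P i : i \notin X -> partition P X ->
  pstar R (i |: X) (plus P i set0) = pstar R X P / (#|X|.+1)%:R.
Proof.
move=> iX pP; rewrite /pstar (prod_fact_plus iX pP (setU11 _ _)) cards0 mul1n.
rewrite (partition_setD0 pP) cardsU1 iX add1n factS natrM.
by field; rewrite natS_neq0 fact_neq0.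
Qed.

Lemma pstar_plus_block X P i B : i \notin X -> partition P X -> B \in P ->
  pstar R (i |: X) (plus P i B) = pstar R X P * (#|B|%:R / (#|X|.+1)%:R).
Proof.
move=> iX pP BP; have hB : B \in set0 |: P by rewrite setU1r.
rewrite /pstar (prod_fact_plus iX pP hB) (big_setD1 B BP) cardsU1 iX add1n factS.
have cB : #|B| = (#|B|.-1).+1 by rewrite prednK // card_gt0 (partition_neq0 pP BP).
rewrite {1}cB factS -cB !natrM.
by field; rewrite natS_neq0 fact_neq0.
Qed.

Lemma ewens_sum_setU1 X i (g : {set {set U}} -> R) : i \notin X ->
  \sum_(Q | partition Q (i |: X)) pstar R (i |: X) Q * g Q =
  \sum_(P | partition P X) pstar R X P *
    ((#|X|.+1)%:R^-1 * g (plus P i set0)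
     + \sum_(B in P) (#|B|%:R / (#|X|.+1)%:R) * g (plus P i B)).
Proof.
move=> iX; rewrite -(sum_partition_plus (fun Q => pstar R (i |: X) Q * g Q) iX).
apply: eq_bigr => P pP; rewrite big_setU1 ?(partition0 pP) //= mulrDr mulr_sumr.
rewrite (pstar_plus_set0 iX pP) mulrA; congr (_ + _).
by apply: eq_bigr => B BP; rewrite (pstar_plus_block iX pP BP) -mulrA.
Qed.

Lemma plus_weights_sum1 X P : partition P X ->
  (#|X|.+1)%:R^-1 + \sum_(B in P) #|B|%:R / (#|X|.+1)%:R = 1 :> R.
Proof.
move=> pP; rewrite -mulr_suml -natr_sum -(card_partition pP).
by rewrite -[X in X + _]mul1r -mulrDl nat1r divff // pnatr_eq0.
Qed.

End Ewens.

Section Values.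
Variables (U : finType) (R : realFieldType).
Implicit Types (N S : {set U}) (i j : U) (w : game U R).

Lemma shapley_null N (v : {set U} -> R) i :
  (forall S, S \subset N :\ i -> v (i |: S) = v S) -> shapley N v i = 0.
Proof. by move=> vi; apply: big1 => S /vi ->; rewrite subrr mulr0. Qed.

Lemma setD_setU1 N S i : i \in N -> S \subset N :\ i -> N :\: S = i |: (N :\ i :\: S).
Proof.
move=> iN /subsetP sS; apply/setP => x; rewrite !inE.
case: (x =P i) => [->|_] //=; rewrite iN andbT; apply: contraTN isT => /sS.
by rewrite !inE eqxx.
Qed.

Lemma vbar_restr N w i S : i \in N -> S \subset N :\ i ->
  vbar (N :\ i) (restr N w i) S = vbar N w S.
Proof.
move=> iN sS; have eNS := setD_setU1 iN sS.
have iX : i \notin N :\ i :\: S by rewrite !inE eqxx andbF.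
have cX : (#|N| - #|S|)%N = #|N :\ i :\: S|.+1.
  have sSN : S \subset N by apply: subset_trans sS (subsetDl _ _).
  by have := cardsU1 i (N :\ i :\: S); rewrite iX -eNS cardsD (setIidPr sSN).
rewrite /vbar eNS ewens_sum_setU1 //; apply: eq_bigr => P _.
by rewrite /restr cX.
Qed.

Lemma vbar_restr_seq N w s S : uniq s -> {subset s <= N} ->
  S \subset N :\: [set x in s] ->
  vbar (N :\: [set x in s]) (restr_seq N w s) S = vbar N w S.
Proof.
elim: s N w => [|i s IH] N w /=; first by rewrite set_nil setD0.
case/andP => si us sN; rewrite set_cons -setDDl => sS.
rewrite IH //; last first.
  by move=> x xs; rewrite !inE sN ?inE ?xs ?orbT // andbT; apply: contraNneq si => <-.
by apply: vbar_restr; [apply: sN; rewrite inE eqxx | exact: subset_trans sS (subsetDl _ _)].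
Qed.

Lemma vbar_null_player N w j S : null_player N w j -> j \in N -> S \subset N :\ j ->
  vbar N w (j |: S) = vbar N w S.
Proof.
move=> nj jN sS; have jX : j \notin N :\ j :\: S by rewrite !inE eqxx andbF.
rewrite /vbar (setD_setU1 jN sS) -setDDl ewens_sum_setU1 //.
apply: eq_bigr => P pP; congr (_ * _).
rewrite -(nj S P set0 sS pP) ?eqxx ?orbT //.
rewrite (eq_bigr (fun B : {set U} => #|B|%:R / #|N :\ j :\: S|.+1%:R * w (j |: S) P)) => [|B BP].
  by rewrite -mulr_suml -mulrDl (plus_weights_sum1 R pP) mul1r.
by rewrite (nj S P B sS pP) ?BP.
Qed.

End Values.

Theorem proposition4 (U : finType) (R : realFieldType) (N : {set U})
    (w : game U R) (j : U) (T : {set U}) (s : seq U) :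
  tux N w -> j \in N -> T \subset N :\ j ->
  uniq s -> [set x in s] = T ->
  null_player N w j ->
  MPW (N :\: T) (restr_seq N w s) j = 0.
Proof.
move=> _ jN sT us eT nj; subst T.
have sN : {subset s <= N}.
  by move=> x xs; move: (subsetP sT x); rewrite !inE xs => /(_ isT) /andP[].
have jNT : j \in N :\: [set x in s].
  by rewrite inE jN andbT; apply: contra_notN (subsetP sT j) _; rewrite !inE eqxx.
apply: shapley_null => S sS.
have sNT : S \subset N :\: [set x in s] by apply: subset_trans sS (subsetDl _ _).
rewrite !vbar_restr_seq // ?subUset ?sub1set ?jNT //.
by apply: vbar_null_player; last exact: subset_trans sS (setSD _ (subsetDl _ _)).
Qed.
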